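(* Let $n\ge1$, let $\Gamma$ be a set of formulas and $\alpha$ a formula with $\Gamma\nvdash_n\alpha$, and suppose $p_1,\dots,p_n$ are distinct propositional variables not occurring in $\Gamma\cup\{\alpha\}$. Then there exists $\Phi\in P^c$ such that $\Gamma\subseteq\Phi$, $\alpha\notin\Phi$, and $|end(\Phi)|\ge n$ (in the poset $(P^c,\subseteq)$).
   Context: Formulas are built from a countably infinite set of propositional variables and $\bot$ using $\land,\lor,\to$; $\neg\alpha:=\alpha\to\bot$. $\mathbf{ML}_n$ is the smallest superintuitionistic logic (containing intuitionistic propositional logic, closed under modus ponens and uniform substitution) that contains all instances of $\boldsymbol{kp}$: $(\neg p\to q\lor r)\to(\neg p\to q)\lor(\neg p\to r)$ and $\boldsymbol{bd}_n$: $p_n\lor(p_n\to(p_{n-1}\lor(p_{n-1}\to(\cdots(p_1\lor(p_1\to\bot))\cdots))))$, and is closed under the rule $\boldsymbol{Ed}_n$: from $\alpha\to(\beta\lor\bigvee_{i=1}^n\neg\lambda_i)$ infer $\alpha\to\beta$, where $p_1,\dots,p_n$ are distinct variables not occurring in $\alpha$ or $\beta$ and $\lambda_i=p_i\land\bigwedge_{j\neq i}\neg p_j$. $\Gamma\vdash_n\varphi$ means there are finitely many $\gamma_1,\dots,\gamma_k\in\Gamma$ with $\bigwedge_i\gamma_i\to\varphi\in\mathbf{ML}_n$. A set $\Gamma$ of formulas is closed if $\Gamma\vdash_n\varphi$ implies $\varphi\in\Gamma$; consistent if $\Gamma\nvdash_n\bot$; prime if $\varphi\lor\psi\in\Gamma$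 implies $\varphi\in\Gamma$ or $\psi\in\Gamma$. $P^c$ is the set of consistent, closed, prime sets, ordered by inclusion. $end(\Phi)$ is the set of maximal elements of $(P^c,\subseteq)$ that contain $\Phi$. *)

From Stdlib Require Import List Arith.
Import ListNotations.

Inductive form : Type :=
| Var : nat -> form
| Bot : form
| And : form -> form -> form
| Or  : form -> form -> form
| Imp : form -> form -> form.

Definition Neg (a : form) : form := Imp a Bot.
Definition Top : form := Imp Bot Bot.

Fixpoint occurs (p : nat) (a : form) : Prop :=
  match a with
  | Var q => p = q
  | Bot => False
  | And b c | Or b c | Imp b c => occurs p b \/ occurs p c
  end.

Fixpoint subst (s : nat -> form) (a : form) : form :=
  match a with
  | Var q => s q
  | Bot => Bot
  | And b c => And (subst s b) (subst s c)
  | Or b c => Or (subst s b) (subst s c)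
  | Imp b c => Imp (subst s b) (subst s c)
  end.

Fixpoint bigAnd (l : list form) : form :=
  match l with
  | [] => Top
  | [x] => x
  | x :: xs => And x (bigAnd xs)
  end.

Fixpoint bigOr (l : list form) : form :=
  match l with
  | [] => Bot
  | [x] => x
  | x :: xs => Or x (bigOr xs)
  end.

(* bd formula: for l = [a_n; ...; a_1],
   a_n \/ (a_n -> (a_{n-1} \/ (a_{n-1} -> ... (a_1 \/ (a_1 -> Bot))))) *)
Fixpoint bdf (l : list form) : form :=
  match l with
  | [] => Bot
  | a :: l' => Or a (Imp a (bdf l'))
  end.

Definition kpf (p q r : form) : form :=
  Imp (Imp (Neg p) (Or q r)) (Or (Imp (Neg p) q) (Imp (Neg p) r)).

Definition lam (ps : list nat) (i : nat) : form :=
  And (Var (nth i ps 0))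
      (bigAnd (map (fun j => Neg (Var (nth j ps 0)))
                   (filter (fun j => negb (Nat.eqb j i)) (seq 0 (length ps))))).

Definition EdDisj (ps : list nat) : form :=
  bigOr (map (fun i => Neg (lam ps i)) (seq 0 (length ps))).

Inductive ML (n : nat) : form -> Prop :=
| ax_K : forall a b, ML n (Imp a (Imp b a))
| ax_S : forall a b c, ML n (Imp (Imp a (Imp b c)) (Imp (Imp a b) (Imp a c)))
| ax_And1 : forall a b, ML n (Imp (And a b) a)
| ax_And2 : forall a b, ML n (Imp (And a b) b)
| ax_AndI : forall a b, ML n (Imp a (Imp b (And a b)))
| ax_Or1 : forall a b, ML n (Imp a (Or a b))
| ax_Or2 : forall a b, ML n (Imp b (Or a b))
| ax_OrE : forall a b c, ML n (Imp (Imp a c) (Imp (Imp b c) (Imp (Or a b) c)))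
| ax_Bot : forall a, ML n (Imp Bot a)
| ax_kp : forall p q r, ML n (kpf p q r)
| ax_bd : forall l, length l = n -> ML n (bdf l)
| r_MP : forall a b, ML n (Imp a b) -> ML n a -> ML n b
| r_subst : forall s a, ML n a -> ML n (subst s a)
| r_Ed : forall (a b : form) (ps : list nat),
    length ps = n -> NoDup ps ->
    (forall p, In p ps -> ~ occurs p a /\ ~ occurs p b) ->
    ML n (Imp a (Or b (EdDisj ps))) -> ML n (Imp a b).

Definition fset := form -> Prop.

Definition derives (n : nat) (G : fset) (phi : form) : Prop :=
  exists l : list form, (forall g, In g l -> G g) /\ ML n (Imp (bigAnd l) phi).

Definition closed_set (n : nat) (G : fset) : Prop :=
  forall phi, derives n G phi -> G phi.
Definition consistent (n : nat) (G : fset) : Prop := ~ derives n G Bot.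
Definition prime_set (G : fset) : Prop :=
  forall a b, G (Or a b) -> G a \/ G b.

Definition Pc (n : nat) (G : fset) : Prop :=
  consistent n G /\ closed_set n G /\ prime_set G.

Definition subset (A B : fset) : Prop := forall phi, A phi -> B phi.
Definition same_set (A B : fset) : Prop := forall phi, A phi <-> B phi.

Definition maximal_Pc (n : nat) (G : fset) : Prop :=
  Pc n G /\ forall D, Pc n D -> subset G D -> subset D G.

Definition in_end (n : nat) (Phi G : fset) : Prop :=
  maximal_Pc n G /\ subset Phi G.

Definition end_card_ge (n : nat) (Phi : fset) (k : nat) : Prop :=
  exists f : nat -> fset,
    (forall i, i < k -> in_end n Phi (f i)) /\
    (forall i j, i < k -> j < k -> i <> j -> ~ same_set (f i) (f j)).

(* Let beta := alpha \/ \/_i ~lambda_i. If Gamma derived beta, the rule Ed_n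
   would give Gamma |- alpha, since the p_i do not occur in Gamma or alpha.
   A Lindenbaum extension Phi of Gamma avoiding beta is in P^c and misses alpha.
   As Phi does not derive ~lambda_i, each Phi + lambda_i is consistent, and its
   Lindenbaum extension avoiding Bot is a maximal element of P^c above Phi.
   These n maximal sets are pairwise distinct because lambda_i /\ lambda_j is
   inconsistent for i <> j. *)

From Stdlib Require Import List Arith Lia Classical Cantor.
Import ListNotations.

Fixpoint form_code (a : form) : nat :=
  match a with
  | Var q => Cantor.to_nat (0, q)
  | Bot => Cantor.to_nat (1, 0)
  | And b c => Cantor.to_nat (2, Cantor.to_nat (form_code b, form_code c))
  | Or b c => Cantor.to_nat (3, Cantor.to_nat (form_code b, form_code c))
  | Imp b c => Cantor.to_nat (4, Cantor.to_nat (form_code b, form_code c))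
  end.

(* The first argument is fuel; it must exceed the depth of the decoded formula. *)
Fixpoint form_decode (fuel k : nat) : form :=
  match fuel with
  | 0 => Bot
  | S fuel =>
      match Cantor.of_nat k with
      | (0, r) => Var r
      | (1, _) => Bot
      | (2, r) => let (x, y) := Cantor.of_nat r in
                  And (form_decode fuel x) (form_decode fuel y)
      | (3, r) => let (x, y) := Cantor.of_nat r in
                  Or (form_decode fuel x) (form_decode fuel y)
      | (_, r) => let (x, y) := Cantor.of_nat r in
                  Imp (form_decode fuel x) (form_decode fuel y)
      end
  end.

Fixpoint form_depth (a : form) : nat :=
  match a with
  | Var _ | Bot => 0
  | And b c | Or b c | Imp b c => S (Nat.max (form_depth b) (form_depth c))
  end.

Lemma form_decode_code a fuel :
  form_depth a < fuel -> form_decode fuel (form_code a) = a.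
Proof.
  revert fuel; induction a; intros [|fuel] Hfuel; cbn [form_depth] in Hfuel;
    try lia; cbn [form_decode form_code]; rewrite ?Cantor.cancel_of_to;
    try reflexivity; rewrite ?Cantor.cancel_of_to, IHa1, IHa2; auto; lia.
Qed.

Definition form_enum (k : nat) : form :=
  let (fuel, code) := Cantor.of_nat k in form_decode fuel code.

Lemma form_enum_surj a : exists k, form_enum k = a.
Proof.
  exists (Cantor.to_nat (S (form_depth a), form_code a)).
  unfold form_enum; rewrite Cantor.cancel_of_to.
  apply form_decode_code; lia.
Qed.

Notation extend G a := (fun y => G y \/ y = a).

Section HilbertDerivations.

Variable n : nat.

Inductive hprov (G : fset) : form -> Prop :=
| hprov_hyp a : G a -> hprov G a
| hprov_ax a : ML n a -> hprov G a
| hprov_mp a b : hprov G (Imp a b) -> hprov G a -> hprov G b.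

Lemma hprov_mono G G' a : hprov G a -> subset G G' -> hprov G' a.
Proof.
  induction 1; intros HGG'.
  - apply hprov_hyp; auto.
  - apply hprov_ax; auto.
  - eapply hprov_mp; eauto.
Qed.

Lemma hprov_cut G G' a :
  hprov G a -> (forall y, G y -> hprov G' y) -> hprov G' a.
Proof.
  induction 1; intros HG.
  - auto.
  - apply hprov_ax; auto.
  - eapply hprov_mp; eauto.
Qed.

Lemma hprov_ML a : hprov (fun _ => False) a -> ML n a.
Proof. induction 1; [contradiction | auto | eapply r_MP; eauto]. Qed.

Lemma ML_imp_refl a : ML n (Imp a a).
Proof.
  apply (r_MP n (Imp a (Imp a a))).
  - apply (r_MP n (Imp a (Imp (Imp a a) a))); [apply ax_S | apply ax_K].
  - apply ax_K.
Qed.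

Lemma hprov_deduction G a b : hprov (extend G a) b -> hprov G (Imp a b).
Proof.
  induction 1 as [x [Hx | ->] | x Hx | x y _ IHxy _ IHx].
  - eapply hprov_mp; [apply hprov_ax, ax_K | apply hprov_hyp; auto].
  - apply hprov_ax, ML_imp_refl.
  - eapply hprov_mp; [apply hprov_ax, ax_K | apply hprov_ax; auto].
  - eapply hprov_mp; [eapply hprov_mp; [apply hprov_ax, ax_S | exact IHxy] | exact IHx].
Qed.

Lemma hprov_compact G a :
  hprov G a -> exists l, (forall x, In x l -> G x) /\ hprov (fun x => In x l) a.
Proof.
  induction 1 as [a Ha | a Ha | a b _ [l1 [Hl1 P1]] _ [l2 [Hl2 P2]]].
  - exists [a]; split; [intros x [<- | []]; auto | apply hprov_hyp; simpl; auto].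
  - exists []; split; [intros x [] | apply hprov_ax; auto].
  - exists (l1 ++ l2); split.
    + intros x Hx; apply in_app_or in Hx as [Hx | Hx]; auto.
    + apply hprov_mp with a; [eapply hprov_mono; [exact P1 |] | eapply hprov_mono; [exact P2 |]];
        intros x Hx; apply in_or_app; auto.
Qed.

Lemma hprov_bigAnd l : hprov (fun x => In x l) (bigAnd l).
Proof.
  induction l as [| x [| y l] IHl].
  - apply hprov_ax, ax_Bot.
  - apply hprov_hyp; simpl; auto.
  - change (bigAnd (x :: y :: l)) with (And x (bigAnd (y :: l))).
    apply hprov_mp with (bigAnd (y :: l)).
    + apply hprov_mp with x; [apply hprov_ax, ax_AndI | apply hprov_hyp; simpl; auto].
    + eapply hprov_mono; [exact IHl |]; intros z Hz; right; exact Hz.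
Qed.

Lemma hprov_bigAnd_elim l x : In x l -> hprov (fun y => y = bigAnd l) x.
Proof.
  induction l as [| y [| z l] IHl]; intros Hx.
  - destruct Hx.
  - destruct Hx as [<- | []]; apply hprov_hyp; reflexivity.
  - destruct Hx as [<- | Hx].
    + apply hprov_mp with (bigAnd (y :: z :: l));
        [apply hprov_ax, ax_And1 | apply hprov_hyp; reflexivity].
    + eapply hprov_cut; [exact (IHl Hx) |]; intros w ->.
      apply hprov_mp with (bigAnd (y :: z :: l));
        [apply hprov_ax, ax_And2 | apply hprov_hyp; reflexivity].
Qed.

Lemma hprov_bigOr_intro l x : In x l -> hprov (fun y => y = x) (bigOr l).
Proof.
  induction l as [| y [| z l] IHl]; intros Hx.
  - destruct Hx.
  - destruct Hx as [<- | []]; apply hprov_hyp; reflexivity.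
  - change (bigOr (y :: z :: l)) with (Or y (bigOr (z :: l))).
    destruct Hx as [<- | Hx].
    + apply hprov_mp with y; [apply hprov_ax, ax_Or1 | apply hprov_hyp; reflexivity].
    + apply hprov_mp with (bigOr (z :: l)); [apply hprov_ax, ax_Or2 | exact (IHl Hx)].
Qed.

Lemma derives_hprov G a : derives n G a <-> hprov G a.
Proof.
  split.
  - intros [l [Hl HML]].
    apply hprov_mp with (bigAnd l); [apply hprov_ax; exact HML |].
    eapply hprov_cut; [apply hprov_bigAnd |]; intros y Hy; apply hprov_hyp; auto.
  - intros HG; destruct (hprov_compact G a HG) as [l [Hl Pl]].
    exists l; split; [exact Hl |].
    apply hprov_ML, hprov_deduction.
    eapply hprov_cut; [exact Pl |]; intros y Hy.
    eapply hprov_mono; [exact (hprov_bigAnd_elim l y Hy) |]; intros z ->; right; reflexivity.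
Qed.

Section Lindenbaum.

Variables (G : fset) (b : form).
Hypothesis G_nprov : ~ hprov G b.

Fixpoint lindenbaum_chain (k : nat) : fset :=
  match k with
  | 0 => G
  | S k => fun y => lindenbaum_chain k y \/
      (y = form_enum k /\ ~ hprov (extend (lindenbaum_chain k) (form_enum k)) b)
  end.

Definition lindenbaum : fset := fun y => exists k, lindenbaum_chain k y.

Lemma lindenbaum_chain_mono k m : k <= m -> subset (lindenbaum_chain k) (lindenbaum_chain m).
Proof. induction 1; intros y Hy; simpl; auto. Qed.

Lemma lindenbaum_chain_nprov k : ~ hprov (lindenbaum_chain k) b.
Proof.
  induction k as [| k IHk]; [exact G_nprov |]; simpl; intros Hk.
  destruct (classic (hprov (extend (lindenbaum_chain k) (form_enum k)) b)) as [Hext | Hext].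
  - apply IHk; eapply hprov_mono; [exact Hk |]; intros x [Hx | [_ Hx]]; tauto.
  - apply Hext; eapply hprov_mono; [exact Hk |]; intros x [Hx | [Hx _]]; auto.
Qed.

Lemma lindenbaum_finite l :
  (forall x, In x l -> lindenbaum x) -> exists k, forall x, In x l -> lindenbaum_chain k x.
Proof.
  induction l as [| a l IHl]; intros Hl.
  - exists 0; intros x [].
  - destruct IHl as [K HK]; [intros x Hx; apply Hl; right; exact Hx |].
    destruct (Hl a (or_introl eq_refl)) as [k Hk].
    exists (Nat.max k K); intros x [<- | Hx].
    + eapply lindenbaum_chain_mono; [| exact Hk]; lia.
    + eapply lindenbaum_chain_mono; [| exact (HK x Hx)]; lia.
Qed.

Lemma lindenbaum_nprov : ~ hprov lindenbaum b.
Proof.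
  intros HL; destruct (hprov_compact _ _ HL) as [l [Hl Pl]].
  destruct (lindenbaum_finite l Hl) as [k Hk].
  apply (lindenbaum_chain_nprov k); eapply hprov_mono; [exact Pl | exact Hk].
Qed.

Lemma lindenbaum_sub : subset G lindenbaum.
Proof. intros x Hx; exists 0; exact Hx. Qed.

Lemma lindenbaum_extend_hprov x : ~ lindenbaum x -> hprov (extend lindenbaum x) b.
Proof.
  intros Hx; destruct (form_enum_surj x) as [k <-].
  apply NNPP; intros Hn; apply Hx; exists (S k); simpl; right; split; [reflexivity |].
  intros Hk; apply Hn; eapply hprov_mono; [exact Hk |].
  intros y [Hy | Hy]; [left; exists k | right]; auto.
Qed.

Lemma lindenbaum_closed x : hprov lindenbaum x -> lindenbaum x.
Proof.
  intros Hx; apply NNPP; intros Hn; apply lindenbaum_nprov.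
  eapply hprov_cut; [exact (lindenbaum_extend_hprov x Hn) |].
  intros y [Hy | ->]; [apply hprov_hyp |]; auto.
Qed.

Lemma lindenbaum_prime : prime_set lindenbaum.
Proof.
  intros x y Hxy; apply NNPP; intros Hn; apply lindenbaum_nprov.
  apply hprov_mp with (Or x y); [| apply hprov_hyp; exact Hxy].
  apply hprov_mp with (Imp y b); [apply hprov_mp with (Imp x b); [apply hprov_ax, ax_OrE |] |];
    apply hprov_deduction, lindenbaum_extend_hprov; tauto.
Qed.

Lemma lindenbaum_Pc : Pc n lindenbaum.
Proof.
  split; [| split].
  - intros HBot; apply derives_hprov in HBot; apply lindenbaum_nprov.
    apply hprov_mp with Bot; [apply hprov_ax, ax_Bot | exact HBot].
  - intros phi Hphi; apply lindenbaum_closed, derives_hprov, Hphi.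
  - exact lindenbaum_prime.
Qed.

End Lindenbaum.

Lemma lindenbaum_maximal G (G_cons : ~ hprov G Bot) :
  maximal_Pc n (lindenbaum G Bot).
Proof.
  split; [apply lindenbaum_Pc; exact G_cons |].
  intros D [D_cons _] HsubD x Hx; apply NNPP; intros Hn; apply D_cons, derives_hprov.
  eapply hprov_mono; [exact (lindenbaum_extend_hprov G Bot x Hn) |].
  intros y [Hy | ->]; auto.
Qed.

Lemma occurs_bigAnd p l : occurs p (bigAnd l) -> exists g, In g l /\ occurs p g.
Proof.
  induction l as [| x [| y l] IHl]; intros Hp.
  - destruct Hp as [[] | []].
  - exists x; simpl; auto.
  - destruct Hp as [Hp | Hp]; [exists x; simpl; auto |].
    destruct (IHl Hp) as [g [Hg Hpg]]; exists g; simpl; auto.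
Qed.

Lemma Ed_nprov G a ps :
  length ps = n -> NoDup ps ->
  (forall p, In p ps -> ~ occurs p a /\ (forall g, G g -> ~ occurs p g)) ->
  ~ derives n G a -> ~ hprov G (Or a (EdDisj ps)).
Proof.
  intros Hlen Hnd Hfresh HGa HG; apply derives_hprov in HG as [l [Hl HML]].
  apply HGa; exists l; split; [exact Hl |].
  apply (r_Ed n _ _ ps Hlen Hnd); [| exact HML].
  intros p Hp; destruct (Hfresh p Hp) as [Hpa HpG]; split; [| exact Hpa].
  intros Hpl; destruct (occurs_bigAnd p l Hpl) as [g [Hg Hpg]]; exact (HpG g (Hl g Hg) Hpg).
Qed.

Lemma hprov_EdDisj G ps i :
  i < length ps -> hprov G (Neg (lam ps i)) -> hprov G (EdDisj ps).
Proof.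
  intros Hi Hneg; eapply hprov_cut; [apply (hprov_bigOr_intro _ (Neg (lam ps i))) |].
  - apply (in_map (fun k => Neg (lam ps k))), in_seq; lia.
  - intros y ->; exact Hneg.
Qed.

Lemma lam_inconsistent ps i j :
  i <> j -> i < length ps -> j < length ps ->
  hprov (fun y => y = lam ps i \/ y = lam ps j) Bot.
Proof.
  intros Hij Hi Hj.
  apply hprov_mp with (Var (nth i ps 0)).
  - eapply hprov_cut.
    + apply (hprov_bigAnd_elim (map (fun k => Neg (Var (nth k ps 0)))
               (filter (fun k => negb (Nat.eqb k j)) (seq 0 (length ps))))).
      apply (in_map (fun k => Neg (Var (nth k ps 0)))), filter_In; split.
      * apply in_seq; lia.
      * apply Bool.negb_true_iff, Nat.eqb_neq; exact Hij.
    + intros y ->; apply hprov_mp with (lam ps j);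
        [apply hprov_ax, ax_And2 | apply hprov_hyp; auto].
  - apply hprov_mp with (lam ps i); [apply hprov_ax, ax_And1 | apply hprov_hyp; auto].
Qed.

End HilbertDerivations.

Theorem mainTheorem6 (n : nat) (Gamma : fset) (alpha : form) (ps : list nat) :
  1 <= n ->
  ~ derives n Gamma alpha ->
  length ps = n -> NoDup ps ->
  (forall p, In p ps -> ~ occurs p alpha /\ (forall g, Gamma g -> ~ occurs p g)) ->
  exists Phi : fset,
    Pc n Phi /\ subset Gamma Phi /\ ~ Phi alpha /\ end_card_ge n Phi n.
Proof.
  intros _ HGa Hlen Hnd Hfresh.
  set (beta := Or alpha (EdDisj ps)).
  pose proof (Ed_nprov n Gamma alpha ps Hlen Hnd Hfresh HGa) as HGbeta.
  set (Phi := lindenbaum n Gamma beta).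
  assert (HPhi : ~ hprov n Phi beta) by exact (lindenbaum_nprov n Gamma beta HGbeta).
  assert (Hcons : forall i, i < n -> ~ hprov n (extend Phi (lam ps i)) Bot).
  { intros i Hi HBot; apply HPhi, hprov_mp with (EdDisj ps); [apply hprov_ax, ax_Or2 |].
    apply (hprov_EdDisj n _ _ i); [lia | apply hprov_deduction; exact HBot]. }
  set (ends i := lindenbaum n (extend Phi (lam ps i)) Bot).
  assert (Hends : forall i, subset (extend Phi (lam ps i)) (ends i))
    by (intros i; apply lindenbaum_sub).
  exists Phi; split; [| split; [| split]].
  - exact (lindenbaum_Pc n Gamma beta HGbeta).
  - apply lindenbaum_sub.
  - intros Halpha; apply HPhi, hprov_mp with alpha; [apply hprov_ax, ax_Or1 | apply hprov_hyp; exact Halpha].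
  - exists ends; split.
    + intros i Hi; split; [exact (lindenbaum_maximal n _ (Hcons i Hi)) |].
      intros x Hx; apply Hends; left; exact Hx.
    + intros i j Hi Hj Hij Hsame; apply (lindenbaum_nprov n _ Bot (Hcons i Hi)).
      eapply hprov_cut; [apply (lam_inconsistent n ps i j Hij); lia |].
      intros y [-> | ->]; apply hprov_hyp; [| apply Hsame]; apply Hends; right; reflexivity.
Qed.
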